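(* For every $n\in\mathbb{N}$, every valuation $\mathcal V$, every nonempty chain $c_s$ over $[n]$ and all formulas $\varphi,\psi$: (i) $\varphi^{\mathcal V}\vdash_{(n)}(\neg_{c_s}\varphi)^{\mathcal V}$; (ii) $\varphi^{\mathcal V},\psi^{\mathcal V}\vdash_{(n)}(\varphi\to_{(n)}\psi)^{\mathcal V}$.
   Context: Fix $n\in\mathbb{N}$, $n\ge 1$, and write $[n]=\{1,\dots,n\}$. Chains: a chain over $[n]$ is a finite sequence of distinct elements of $[n]$; chains with the same length and the same symbols are identified, so a chain is effectively a subset of $[n]$. $c_k$ denotes a chain with $k$ symbols, $\epsilon$ the empty chain, and $(n)$ the chain consisting of all symbols of $[n]$. For chains $c,d$: the concatenation $c\cdot d$ is the chain of symbols occurring in $c$ or in $d$; the coconcatenation $c\otimes d$ is the chain of symbols occurring in exactly one of $c,d$; $d$ is a subchain of $c$ if every symbol of $d$ is a symbol of $c$. The complementary chain $c'_{n-k}$ of $c_k$ is the chain of the symbols of $[n]$ not occurring in $c_k$. Language of $\mathbf{CPN}_n$: a countable set $P_n$ of propositional letters; constants $\perp_c$ for each chain $c$ over $[n]$ with $1\le |c|\le n-1$, and constants $\perp_{(n)}$ (contradiction) and $\top_{(n)}$ (truth); a unary connective $\neg_c$ for each nonempty chain $c$ over $[n]$ ($\neg_{(n)}$ is the strong negation; the $\neg_c$ with $|c|\le n-1$ are weak negations); a binary connective $\to_{(n)}$. Formulas: propositional letters and constants are formulas; if $\varphi,\psi$ are formulas then so are $\neg_c\varphi$ and $(\varphi\to_{(n)}\psi)$.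 Conventions: $\neg_\epsilon\varphi:=\varphi$, $\perp_\epsilon:=\top_{(n)}$, and $\perp_c$ for $c=(n)$ means $\perp_{(n)}$. Abbreviations: $\varphi\wedge_{(n)}\psi:=\neg_{(n)}(\varphi\to_{(n)}\neg_{(n)}\psi)$, $\varphi\vee_{(n)}\psi:=\neg_{(n)}\varphi\to_{(n)}\psi$, $\varphi\leftrightarrow_{(n)}\psi:=(\varphi\to_{(n)}\psi)\wedge_{(n)}(\psi\to_{(n)}\varphi)$. Axioms of $\mathbf{CPN}_n$, for all formulas $\varphi,\psi,\chi$ and all nonempty chains $c_k,c_r$ over $[n]$: (A1) $\varphi\to_{(n)}(\psi\to_{(n)}\varphi)$; (A2) $(\varphi\to_{(n)}(\psi\to_{(n)}\chi))\to_{(n)}((\varphi\to_{(n)}\psi)\to_{(n)}(\varphi\to_{(n)}\chi))$; (A3) $(\neg_{(n)}\psi\to_{(n)}\neg_{(n)}\varphi)\to_{(n)}((\neg_{(n)}\psi\to_{(n)}\varphi)\to_{(n)}\psi)$; (A4) $\varphi\to_{(n)}(\perp_{c_k}\to_{(n)}\neg_{c_k}\varphi)$; (A5) $\neg_{c_k}\neg_{c_r}\varphi\leftrightarrow_{(n)}\neg_{c_k\otimes c_r}\varphi$; (A6) $\neg_{c_k}\perp_{c_r}\leftrightarrow_{(n)}\perp_{c_k\otimes c_r}$; (A7) $\perp_{c_k}\to_{(n)}\perp_{c_r}$, whenever $c_r$ is a subchain of $c_k$. The only rule of inference is modus ponens (from $\varphi$ and $\varphi\to_{(n)}\psi$ infer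 $\psi$). For a set $\Sigma$ of formulas, $\Sigma\vdash_{(n)}\varphi$ means there is a finite sequence of formulas ending with $\varphi$, each of which is an axiom, a member of $\Sigma$, or obtained from two earlier members by modus ponens; $\vdash_{(n)}\varphi$ means $\emptyset\vdash_{(n)}\varphi$. Semantics: for each $i\in[n]$ there is a world $\mathcal M_i=\{T_i,F_i\}$ (pairwise disjoint sets). A valuation $\mathcal V$ assigns to each propositional letter $p$ and each $i\in[n]$ a value $v_i(p)\in\mathcal M_i$ (independently for different $i$). It extends to all formulas, for each $i$, by: $\bar v_i(p)=v_i(p)$ for letters; $\bar v_i(\perp_c)=F_i$ if $i$ is a symbol of $c$ and $T_i$ otherwise (so $\bar v_i(\perp_{(n)})=F_i$ and $\bar v_i(\top_{(n)})=T_i$); $\bar v_i(\neg_c\varphi)=\bar v_i(\varphi)$ if $i$ is not a symbol of $c$, and the opposite value ($T_i\leftrightarrow F_i$) if $i$ is a symbol of $c$; $\bar v_i(\varphi\to_{(n)}\psi)=F_i$ iff $\bar v_i(\varphi)=T_i$ and $\bar v_i(\psi)=F_i$, otherwise $T_i$ (hence $\wedge_{(n)},\vee_{(n)}$ behave classically in each world). Write $\bar{\mathcal V}(\varphi)=(\bar v_1(\varphi),\dots,\bar v_n(\varphi))$. A formula $\varphi$ is a tautology, written $\models_{(n)}\varphi$, iff $\bar{\mathcal V}(\varphi)=(T_1,\dots,T_n)$ for every valuation $\mathcal V$. Given a valuation $\mathcal V$ and a chain $c$ over $[n]$ (possibly empty), a formula $\varphi$ is $c$-contingent (under $\mathcal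 V$) if $\bar v_i(\varphi)=F_i$ for every symbol $i$ of $c$ and $\bar v_i(\varphi)=T_i$ for every $i\in[n]$ not in $c$. Every formula is $c$-contingent for exactly one chain $c$, and one sets $\varphi^{\mathcal V}:=\neg_c\varphi$ for that $c$ (so $\varphi^{\mathcal V}=\varphi$ when $\bar{\mathcal V}(\varphi)=(T_1,\dots,T_n)$). *)

From mathcomp Require Import all_boot.
Set Implicit Arguments. Unset Strict Implicit. Unset Printing Implicit Defensive.

(* Chains over [n] are identified with subsets of [n] = 'I_n. *)
Definition chain (n : nat) := {set 'I_n}.
Definition nechain (n : nat) := {c : {set 'I_n} | c != set0}.

Definition cocat n (c d : {set 'I_n}) : {set 'I_n} := (c :\: d) :|: (d :\: c).

(* FBot c is the constant ⊥_c; with the paper's conventions,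
   FBot set0 = ⊤_(n) and FBot [set: 'I_n] = ⊥_(n). *)
Inductive formula (n : nat) : Type :=
| FVar : nat -> formula n
| FBot : {set 'I_n} -> formula n
| FNeg : nechain n -> formula n -> formula n
| FImp : formula n -> formula n -> formula n.

Arguments FVar {n}.
Arguments FBot {n}.
Arguments FNeg {n}.
Arguments FImp {n}.

(* ¬_c φ for an arbitrary chain, with the convention ¬_ε φ := φ *)
Definition negc n (c : {set 'I_n}) (phi : formula n) : formula n :=
  match insub c : option (nechain n) with
  | Some c' => FNeg c' phi
  | None => phi
  end.

Definition sneg n (phi : formula n) := negc [set: 'I_n] phi.
Definition fand n (phi psi : formula n) := sneg (FImp phi (sneg psi)).
Definition for_ n (phi psi : formula n) := FImp (sneg phi) psi.
Definition fiff n (phi psi : formula n) := fand (FImp phi psi) (FImp psi phi).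

Inductive axiom (n : nat) : formula n -> Prop :=
| A1 (phi psi : formula n) : axiom (FImp phi (FImp psi phi))
| A2 (phi psi chi : formula n) :
    axiom (FImp (FImp phi (FImp psi chi))
                (FImp (FImp phi psi) (FImp phi chi)))
| A3 (phi psi : formula n) :
    axiom (FImp (FImp (sneg psi) (sneg phi))
                (FImp (FImp (sneg psi) phi) psi))
| A4 (phi : formula n) (ck : {set 'I_n}) : ck != set0 ->
    axiom (FImp phi (FImp (FBot ck) (negc ck phi)))
| A5 (phi : formula n) (ck cr : {set 'I_n}) : ck != set0 -> cr != set0 ->
    axiom (fiff (negc ck (negc cr phi)) (negc (cocat ck cr) phi))
| A6 (ck cr : {set 'I_n}) : ck != set0 -> cr != set0 ->
    axiom (fiff (negc ck (FBot cr)) (FBot (cocat ck cr)))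
| A7 (ck cr : {set 'I_n}) : ck != set0 -> cr != set0 -> cr \subset ck ->
    axiom (FImp (FBot ck) (FBot cr)).

Inductive derives (n : nat) (Sigma : formula n -> Prop) : formula n -> Prop :=
| DAx phi : axiom phi -> derives Sigma phi
| DHyp phi : Sigma phi -> derives Sigma phi
| DMP phi psi : derives Sigma phi -> derives Sigma (FImp phi psi) ->
    derives Sigma psi.

(* Semantics: T_i = true, F_i = false; a valuation gives independent
   values for each letter and each world i. *)
Definition valuation (n : nat) := nat -> 'I_n -> bool.

Fixpoint eval n (v : valuation n) (i : 'I_n) (phi : formula n) : bool :=
  match phi with
  | FVar p => v p i
  | FBot c => i \notin c
  | FNeg c psi => if i \in val c then ~~ eval v i psi else eval v i psi
  | FImp psi chi => eval v i psi ==> eval v i chi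
  end.

Definition contingent n (v : valuation n) (c : {set 'I_n}) (phi : formula n) :=
  forall i : 'I_n, (i \in c -> eval v i phi = false) /\
                   (i \notin c -> eval v i phi = true).

Definition cont_chain n (v : valuation n) (phi : formula n) : {set 'I_n} :=
  [set i | ~~ eval v i phi].

Definition vpow n (v : valuation n) (phi : formula n) : formula n :=
  negc (cont_chain v phi) phi.

Lemma cont_chain_contingent n (v : valuation n) phi :
  contingent v (cont_chain v phi) phi.
Proof.
by move=> i; rewrite /cont_chain inE; split; case: (eval v i phi).
Qed.

From mathcomp Require Import all_boot.
Set Implicit Arguments. Unset Strict Implicit. Unset Printing Implicit Defensive.

(* In world i the formula [world i] = ⊥_([n] \ {i}) is true exactly at i, and
   assuming it collapses every weak negation: ¬_c φ becomes φ when i ∉ c and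
   ¬_(n) φ when i ∈ c.  Under that assumption φ^V is the literal of φ with
   its truth value at i, and the two claims are instances of the classical
   truth tables of ¬ and →.  Since ⊢ ⊥_(n) → χ, ⊢ ⊤_(n), and from ⊥_c
   together with ¬_(n) (world i) one gets ⊥_(c ∪ {i}), a case split over the
   worlds one at a time reduces any goal to its instances under [world i]. *)

Section Hilbert.
Variable n : nat.
Implicit Types (S : formula n -> Prop) (p q r : formula n).

Definition extend S p : formula n -> Prop := fun x => S x \/ x = p.

Lemma mp S p q : derives S (FImp p q) -> derives S p -> derives S q.
Proof. by move=> hpq hp; apply: DMP hp hpq. Qed.

Lemma ax1 S p q : derives S (FImp p (FImp q p)).
Proof. by apply: DAx; apply: A1. Qed.

Lemma ax2 S p q r :
  derives S (FImp (FImp p (FImp q r)) (FImp (FImp p q) (FImp p r))).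
Proof. by apply: DAx; apply: A2. Qed.

Lemma ax3 S p q :
  derives S (FImp (FImp (sneg q) (sneg p)) (FImp (FImp (sneg q) p) q)).
Proof. by apply: DAx; apply: A3. Qed.

Lemma derives_weaken S S' p :
  (forall x, S x -> S' x) -> derives S p -> derives S' p.
Proof.
move=> sub_SS'; elim=> [x ax_x|x /sub_SS' S'x|x y _ hx _ hxy].
- exact: DAx.
- exact: DHyp.
- exact: DMP hx hxy.
Qed.

Lemma hyp S p : derives (extend S p) p.
Proof. by apply: DHyp; right. Qed.

Lemma derives_extend S p q : derives S q -> derives (extend S p) q.
Proof. by apply: derives_weaken => x; left. Qed.

Lemma imp_refl S p : derives S (FImp p p).
Proof. exact: mp (mp (ax2 S p (FImp p p) p) (ax1 S p (FImp p p))) (ax1 S p p). Qed.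

Lemma deduction S p q : derives (extend S p) q -> derives S (FImp p q).
Proof.
elim=> [x ax_x|x [Sx|->]|x y _ hx _ hxy].
- exact: mp (ax1 S x p) (DAx S ax_x).
- exact: mp (ax1 S x p) (DHyp Sx).
- exact: imp_refl.
- exact: mp (mp (ax2 S p x y) hxy) hx.
Qed.

Lemma dneg_elim S p : derives S (sneg (sneg p)) -> derives S p.
Proof. by move=> h; apply: mp (mp (ax3 S (sneg p) p) (mp (ax1 _ _ _) h)) (imp_refl S _). Qed.

Lemma dneg_intro S p : derives S p -> derives S (sneg (sneg p)).
Proof.
move=> h; apply: mp (mp (ax3 S p (sneg (sneg p))) _) (mp (ax1 _ _ _) h).
exact/deduction/dneg_elim/hyp.
Qed.

Lemma explode S p q : derives S (sneg p) -> derives S p -> derives S q.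
Proof.
by move=> hnp hp; apply: mp (mp (ax3 S p q) (mp (ax1 _ _ _) hnp)) (mp (ax1 _ _ _) hp).
Qed.

Lemma contra S p q : derives S (FImp p q) -> derives S (FImp (sneg q) (sneg p)).
Proof.
move=> hpq; apply: deduction.
apply: mp (mp (ax3 _ q (sneg p)) (mp (ax1 _ _ _) (hyp S _))) _.
apply/derives_extend/deduction.
exact: mp (derives_extend _ hpq) (dneg_elim (hyp S _)).
Qed.

Lemma by_cases S p q :
  derives S (FImp p q) -> derives S (FImp (sneg p) q) -> derives S q.
Proof. by move=> hp hnp; apply: mp (mp (ax3 S (sneg p) q) (contra hnp)) (contra hp). Qed.

Lemma neg_imp_intro S p q :
  derives S p -> derives S (sneg q) -> derives S (sneg (FImp p q)).
Proof.
move=> hp hnq; apply: mp (contra _) hnq.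
by apply: deduction; apply: mp (hyp S _) (derives_extend _ hp).
Qed.

Definition lit (b : bool) p : formula n := if b then p else sneg p.

Lemma lit_imp S a b p q : derives S (lit a p) -> derives S (lit b q) ->
  derives S (lit (a ==> b) (FImp p q)).
Proof.
case: a => /= hp hq; last first.
  by apply: deduction; apply: explode (derives_extend _ hp) (hyp _ _).
by case: b hq => /= hq; [apply: mp (ax1 _ _ _) hq | apply: neg_imp_intro hp hq].
Qed.

Lemma fand_l S p q : derives S (fand p q) -> derives S p.
Proof.
move=> h; apply: dneg_elim; apply: mp (contra _) h.
by do 2 apply: deduction; apply: explode (derives_extend _ (hyp S _)) (hyp _ _).
Qed.

Lemma fand_r S p q : derives S (fand p q) -> derives S q.
Proof. by move=> h; apply: dneg_elim; apply: mp (contra (ax1 _ _ _)) h. Qed.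

Lemma fiff_l S p q : derives S (fiff p q) -> derives S (FImp p q).
Proof. exact: fand_l. Qed.

Lemma fiff_r S p q : derives S (fiff p q) -> derives S (FImp q p).
Proof. exact: fand_r. Qed.

End Hilbert.

Section Chains.
Variable n : nat.
Implicit Types (c d : {set 'I_n}) (p : formula n).

Lemma negc_set0 p : negc set0 p = p.
Proof. by rewrite /negc insubF // eqxx. Qed.

Lemma eval_negc (v : valuation n) i c p :
  eval v i (negc c p) = (i \in c) (+) eval v i p.
Proof.
rewrite /negc; case: insubP => [c' _ <- /=|].
  by case: (i \in val c'); case: (eval v i p).
by rewrite negbK => /eqP ->; rewrite in_set0.
Qed.

Lemma cocatii c : cocat c c = set0.
Proof. by apply/setP => j; rewrite !inE; case: (j \in c). Qed.

Lemma cocatTc c : cocat setT c = ~: c.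
Proof. by apply/setP => j; rewrite !inE; case: (j \in c). Qed.

Lemma cocatCc c : cocat (~: c) c = setT.
Proof. by apply/setP => j; rewrite !inE; case: (j \in c). Qed.

Lemma cocat_disjoint c d : [disjoint c & d] -> cocat c d = c :|: d.
Proof.
move=> /pred0P cd; apply/setP => j; move: (cd j); rewrite /= !inE.
by case: (j \in c); case: (j \in d).
Qed.

End Chains.

Section Constants.
Variables (n : nat) (n_gt0 : 0 < n).
Implicit Types (S : formula n -> Prop) (p q : formula n) (c d : {set 'I_n}).

Lemma setT_neq0 : [set: 'I_n] != set0.
Proof. by apply/set0Pn; exists (Ordinal n_gt0); rewrite inE. Qed.

Lemma negc_intro S p c : derives S (FImp p (FImp (FBot c) (negc c p))).
Proof.
have [->|c_neq0] := eqVneq c set0; first by rewrite negc_set0; apply: ax1.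
by apply: DAx; apply: A4.
Qed.

(* A4 for ⊥_(n) turns both q and ¬_(n) q into their strong negations. *)
Lemma botT_explode S q : derives S (FBot setT) -> derives S q.
Proof.
move=> hT; have sneg_of r : derives S (FImp r (sneg r)).
  by apply: deduction; apply: mp (mp (negc_intro _ _ _) (hyp _ _)) (derives_extend _ hT).
apply: by_cases (imp_refl _ _) _.
by apply: deduction; apply: dneg_elim; apply: mp (derives_extend _ (sneg_of _)) (hyp _ _).
Qed.

Lemma top_derivable S : derives S (FBot set0).
Proof.
have := fiff_l (DAx S (A6 setT_neq0 setT_neq0)); rewrite cocatii => /mp; apply.
apply: (by_cases (p := FBot setT)); last exact: imp_refl.
exact/deduction/botT_explode/hyp.
Qed.

Lemma bot_subset S c d : d \subset c -> derives S (FBot c) -> derives S (FBot d).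
Proof.
move=> sub_dc hc; have [->|d_neq0] := eqVneq d set0; first exact: top_derivable.
have c_neq0 : c != set0.
  by case/set0Pn: d_neq0 => j jd; apply/set0Pn; exists j; apply: (subsetP sub_dc).
exact: mp (DAx S (A7 c_neq0 d_neq0 sub_dc)) hc.
Qed.

Lemma sneg_bot S c : derives S (sneg (FBot c)) -> derives S (FBot (~: c)).
Proof.
move=> h; have [c0|c_neq0] := eqVneq c set0.
  by apply: explode h _; rewrite c0; apply: top_derivable.
by have := fiff_l (DAx S (A6 setT_neq0 c_neq0)); rewrite cocatTc => /mp; apply.
Qed.

(* ⊥_c is weakened to ⊥_(c \ d) so that A4 and A6 can add the disjoint d. *)
Lemma bot_setU S c d :
  derives S (FBot c) -> derives S (FBot d) -> derives S (FBot (c :|: d)).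
Proof.
move=> hc hd; have hcd := bot_subset (subsetDl c d) hc.
have -> : c :|: d = d :|: (c :\: d).
  by apply/setP => j; rewrite !inE; case: (j \in c); case: (j \in d).
have [->|cd_neq0] := eqVneq (c :\: d) set0; first by rewrite setU0.
have [d0|d_neq0] := eqVneq d set0; first by rewrite d0 set0U setD0.
rewrite -cocat_disjoint; last by rewrite disjoint_sym disjoints_subset subsetDr.
apply: mp (fiff_l (DAx S (A6 d_neq0 cd_neq0))) _.
exact: mp (mp (negc_intro _ _ _) hcd) hd.
Qed.

End Constants.

Section Worlds.
Variables (n : nat) (n_gt0 : 0 < n).
Implicit Types (S : formula n -> Prop) (p q : formula n) (x : {set 'I_n}).
Implicit Types (v : valuation n).

Definition world (i : 'I_n) : formula n := FBot (~: [set i]).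

Lemma world_bot S i x : i \notin x -> derives S (world i) -> derives S (FBot x).
Proof.
move=> i_notin_x; apply: (bot_subset n_gt0); apply/subsetP => j jx.
by rewrite !inE; apply: contraNneq i_notin_x => <-.
Qed.

(* A4 gives p → ¬_x p and, applied to ¬_x p, A5 folds ¬_x ¬_x p back to p. *)
Lemma negc_bot S x p : derives S (FBot x) ->
  derives S (FImp p (negc x p)) /\ derives S (FImp (negc x p) p).
Proof.
move=> hx; have [->|x_neq0] := eqVneq x set0.
  by rewrite negc_set0; split; apply: imp_refl.
have negc_of q : derives S (FImp q (negc x q)).
  by apply: deduction; apply: mp (mp (negc_intro _ _ _) (hyp _ _)) (derives_extend _ hx).
split=> //; have := fiff_l (DAx S (A5 p x_neq0 x_neq0)).
rewrite cocatii negc_set0 => fold_negc; apply: deduction.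
exact: mp (derives_extend _ fold_negc) (mp (derives_extend _ (negc_of _)) (hyp _ _)).
Qed.

(* For i ∈ x, ¬_x p is ¬_(~x) (¬_(n) p) by A5, and i ∉ ~x. *)
Lemma negc_world S i x p : derives S (world i) ->
  derives S (FImp (lit (i \notin x) p) (negc x p)) /\
  derives S (FImp (negc x p) (lit (i \notin x) p)).
Proof.
move=> hw; rewrite /lit; case: ifPn => [i_notin_x|/negbNE i_in_x].
  exact: negc_bot _ (world_bot i_notin_x hw).
have [xT|Cx_neq0] := eqVneq (~: x) set0.
  by rewrite -(setCK x) xT setC0; split; apply: imp_refl.
have x_neq0 : x != set0 by apply/set0Pn; exists i.
have i_notin_Cx : i \notin ~: x by rewrite inE i_in_x.
have [to_negc from_negc] := negc_bot (negc x p) (world_bot i_notin_Cx hw).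
have := DAx S (A5 p Cx_neq0 x_neq0); rewrite cocatCc => hA5.
split; apply: deduction.
  apply: mp (derives_extend _ from_negc) _.
  exact: mp (derives_extend _ (fiff_r hA5)) (hyp _ _).
apply: mp (derives_extend _ (fiff_l hA5)) _.
exact: mp (derives_extend _ to_negc) (hyp _ _).
Qed.

Lemma lit_negc S i x b p : derives S (world i) -> derives S (lit b p) ->
  derives S (lit ((i \in x) (+) b) (negc x p)).
Proof.
move=> hw; have [to_negc from_negc] := negc_world x p hw.
by case: b; case: (i \in x) to_negc from_negc => /= to_negc from_negc hp;
  [apply: mp (contra from_negc) (dneg_intro hp) | apply: mp to_negc hp
  | apply: mp to_negc hp | apply: mp (contra from_negc) hp].
Qed.

(* [later k] = ⊥_{j | k <= j} runs from ⊥_(n) (k = 0) to ⊤_(n) (k = n). *)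
Lemma world_cases S q : (forall i, derives S (FImp (world i) q)) -> derives S q.
Proof.
move=> world_q; pose later k := FBot [set j : 'I_n | k <= j].
suff later_q k : k <= n -> derives S (FImp (later k) q).
  have := later_q n (leqnn n).
  have -> : later n = FBot set0.
    by congr FBot; apply/setP => j; rewrite !inE leqNgt ltn_ord.
  by move/mp; apply; apply: top_derivable n_gt0 S.
elim: k => [_|k IH lt_kn].
  have -> : later 0 = FBot setT by congr FBot; apply/setP => j; rewrite !inE.
  exact/deduction/botT_explode/hyp.
pose k' := Ordinal lt_kn.
apply: deduction; apply: (by_cases (p := world k')).
  exact: derives_extend (world_q k').
apply: deduction; apply: mp (derives_extend _ (derives_extend _ (IH (ltnW lt_kn)))) _.
have -> : later k = FBot (~: ~: [set k'] :|: [set j : 'I_n | k.+1 <= j]).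
  by congr FBot; apply/setP => j; rewrite setCK !inE -val_eqE leq_eqVlt eq_sym.
apply: (bot_setU n_gt0); first by apply: sneg_bot n_gt0 _ _ (hyp _ _).
exact/derives_extend/hyp.
Qed.

Lemma vpow_lit S v i p : derives S (world i) -> derives S (vpow v p) ->
  derives S (lit (eval v i p) p).
Proof.
move=> hw; have [_ from_vpow] := negc_world (cont_chain v p) p hw.
by move: from_vpow; rewrite /cont_chain inE negbK; apply: mp.
Qed.

Lemma vpow_of_lits S v q :
  (forall i, derives (extend S (world i)) (lit (eval v i q) q)) ->
  derives S (vpow v q).
Proof.
move=> lit_q; apply: world_cases => i; apply: deduction.
have [to_vpow _] := negc_world (cont_chain v q) q (hyp S (world i)).
by move: to_vpow; rewrite /cont_chain inE negbK => /mp; apply.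
Qed.

End Worlds.

Theorem mainTheorem13 :
  forall (n : nat), 0 < n ->
  forall (v : valuation n) (cs : {set 'I_n}), cs != set0 ->
  forall (phi psi : formula n),
    derives (fun chi => chi = vpow v phi) (vpow v (negc cs phi)) /\
    derives (fun chi => chi = vpow v phi \/ chi = vpow v psi)
            (vpow v (FImp phi psi)).
Proof.
move=> n n_gt0 v cs _ phi psi; split; apply: (vpow_of_lits n_gt0) => i.
- rewrite eval_negc; apply: (lit_negc n_gt0 _ (hyp _ _)).
  by apply: (vpow_lit n_gt0 (hyp _ _)); apply: DHyp; left.
- apply: lit_imp; apply: (vpow_lit n_gt0 (hyp _ _)); apply: DHyp.
  + by left; left.
  + by left; right.
Qed.
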